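(* Let $c_1,\dots,c_t$ and $d_1,\dots,d_r$ be block columns in $C_n^*$ such that every $c_i$ consists only of unbarred letters, every $d_j$ consists only of barred letters, and $w=c_1\cdots c_t\,d_1\cdots d_r$ is a column. Let $x_i$ be the largest (rightmost) letter of $c_i$ and let $\overline{y_j}$ be the smallest (leftmost) letter of $d_j$. Then $w$ is admissible if and only if $N_z(w)\le z$ for every $z\in\{x_1,\dots,x_t,y_1,\dots,y_r\}$.
   Context: Fix $n\ge 1$ and the totally ordered alphabet $C_n=\{1<2<\cdots<n<\overline{n}<\overline{n-1}<\cdots<\overline{1}\}$; letters $1,\dots,n$ are unbarred, $\overline 1,\dots,\overline n$ barred. $C_n^*$ is the free monoid of words on $C_n$. A column is a word $x_1\cdots x_k$ with $x_1<x_2<\cdots<x_k$. For a column $u$ and $z\in\{1,\dots,n\}$, $N_z(u)$ is the number of letters $x$ of $u$ with $x\le z$ or $x\ge \overline z$. A column $u$ is admissible if it is nonempty and $N_z(u)\le z$ for all $z=1,\dots,n$. A block column is a column $x_1\cdots x_k$ in which each $x_{i+1}$ is the immediate successor of $x_i$ in the total order of $C_n$. *)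

From mathcomp Require Import all_boot.
Set Implicit Arguments. Unset Strict Implicit. Unset Printing Implicit Defensive.

(* Letters of C_n: (false, i) is the unbarred letter i, (true, i) is the
   barred letter \overline{i}; a letter is in C_n when 1 <= i <= n. *)
Definition letter := (bool * nat)%type.
Definition unbar (i : nat) : letter := (false, i).
Definition bar (i : nat) : letter := (true, i).
Definition is_barred (x : letter) : bool := x.1.
Definition in_Cn (n : nat) (x : letter) : bool := (0 < x.2 <= n).

(* Position in the total order 1 < 2 < ... < n < \bar n < ... < \bar 1:
   i has rank i, \bar i has rank 2n+1-i. *)
Definition rank (n : nat) (x : letter) : nat :=
  if x.1 then (2 * n).+1 - x.2 else x.2.
Definition leC (n : nat) (x y : letter) : bool := rank n x <= rank n y.
Definition ltC (n : nat) (x y : letter) : bool := rank n x < rank n y.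

Definition word (n : nat) (w : seq letter) : bool := all (in_Cn n) w.

Definition column (n : nat) (u : seq letter) : bool :=
  word n u && sorted (ltC n) u.

Definition immsucc (n : nat) (x y : letter) : bool := rank n y == (rank n x).+1.
Definition block_column (n : nat) (u : seq letter) : bool :=
  column n u && sorted (immsucc n) u.

Definition Nz (n z : nat) (u : seq letter) : nat :=
  count (fun x => leC n x (unbar z) || leC n (bar z) x) u.

Definition admissible (n : nat) (u : seq letter) : bool :=
  (u != [::]) && [forall z : 'I_n.+1, (0 < z) ==> (Nz n z u <= z)].

Definition dflt_letter : letter := (false, 0).

From mathcomp Require Import all_boot zify.
Set Implicit Arguments. Unset Strict Implicit. Unset Printing Implicit Defensive.

(* On a word of C_n, N_z only depends on the values |x| of the letters:
   N_z(u) counts the letters with |x| <= z.  Hence N_{z+1}(u) exceeds N_z(u)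
   by the number of letters of value z+1; in particular N_z(u) <= z follows
   from N_{z+1}(u) <= z+1 as soon as the value z+1 occurs in u.
   Call a set S of values an anchor set for u when every value occurring in u
   either lies in S or is followed by an occurrence of the next value.  A
   downward induction shows N_y(u) <= y for every occurring value y once this
   holds on S, and an upward induction extends the bound to all y <= n
   (at a non-occurring value N_y does not grow).
   For the theorem, the ends x_i of the unbarred blocks and y_j of the barred
   blocks form an anchor set: inside an unbarred block, a letter i that is not
   the last one is followed by i+1; inside a barred block, a letter \bar i
   that is not the first one is preceded by \bar{i+1}.  The converse direction
   is immediate since the anchors are values of letters of the word. *)

Definition value_is (y : nat) (x : letter) : bool := x.2 == y.

Lemma Nz_count n z u :
  z <= n -> word n u -> Nz n z u = count (fun x : letter => x.2 <= z) u.
Proof.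
move=> zn /allP wu; apply: eq_in_count => -[[] i] /wu;
  rewrite /in_Cn /leC /rank /= => /andP[i0 iN]; apply/idP/idP;
  by [case/orP; lia | move=> h; apply/orP; (left + right); lia].
Qed.

Lemma count_value_leS z (u : seq letter) :
  count (fun x : letter => x.2 <= z.+1) u
  = count (fun x : letter => x.2 <= z) u + count (value_is z.+1) u.
Proof. by elim: u => //= x u ->; rewrite /value_is; case: ltngtP; lia. Qed.

Lemma value_in_range n u y : word n u -> has (value_is y) u -> 0 < y <= n.
Proof. by move=> /allP wu /hasP[x /wu]; rewrite /in_Cn /value_is => + /eqP <-. Qed.

Lemma Nz_le_pred n y u :
  y < n -> word n u -> has (value_is y.+1) u ->
  Nz n y.+1 u <= y.+1 -> Nz n y u <= y.
Proof.
move=> yn wu; rewrite has_count !Nz_count // ?(ltnW yn) // count_value_leS; lia.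
Qed.

Lemma Nz_not_occurring n y u :
  y < n -> word n u -> ~~ has (value_is y.+1) u -> Nz n y.+1 u = Nz n y u.
Proof.
move=> yn wu; rewrite has_count -leqNgt leqn0 => /eqP c0.
by rewrite !Nz_count // ?(ltnW yn) // count_value_leS c0 addn0.
Qed.

Lemma Nz_bound_from_anchors n (S : seq nat) u :
  word n u ->
  (forall y, has (value_is y) u -> (y \in S) || has (value_is y.+1) u) ->
  (forall y, y \in S -> Nz n y u <= y) ->
  forall y, y <= n -> Nz n y u <= y.
Proof.
move=> wu closed anchors.
have occurring k y : n - y <= k -> has (value_is y) u -> Nz n y u <= y.
  elim: k y => [|k IH] y yk yu; have /andP[_ yn] := value_in_range wu yu;
    have /orP[/anchors //|y1u] := closed y yu;
    have /andP[_ y1n] := value_in_range wu y1u.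
    lia.
  by apply: (Nz_le_pred _ wu y1u (IH _ _ y1u)); lia.
elim=> [|y IH] yn.
  rewrite Nz_count // leqNgt -has_count.
  by apply/hasP => -[x /(allP wu) /andP[x0 _] /=]; lia.
have [y1u|y1u] := boolP (has (value_is y.+1) u); first exact: occurring _ _ (leqnn _) y1u.
by rewrite Nz_not_occurring //; apply: leq_trans (IH (ltnW yn)) (leqnSn y).
Qed.

Lemma sorted_succ (T : eqType) (r : rel T) x0 s x :
  sorted r s -> x \in s -> x != last x0 s -> exists2 y, y \in s & r x y.
Proof.
elim: s x0 => // a s IH x0 /= sorted_as; rewrite in_cons => /orP[/eqP->|xs] xl.
  case: s sorted_as xl {IH} => [|b s] /=; first by rewrite eqxx.
  by case/andP => rab _ _; exists b; rewrite ?inE ?eqxx ?orbT.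
case: s IH sorted_as xs xl => // b s IH sorted_as xs xl.
have [y ys rxy] := IH a (path_sorted sorted_as) xs xl.
by exists y; rewrite // inE ys orbT.
Qed.

Lemma sorted_pred (T : eqType) (r : rel T) x0 s x :
  sorted r s -> x \in s -> x != head x0 s -> exists2 y, y \in s & r y x.
Proof.
elim: s x0 => // a s IH x0 /= sorted_as; rewrite in_cons => /orP[/eqP->|xs] xh.
  by rewrite eqxx in xh.
case: s IH sorted_as xs xh => // b s IH /= /andP[rab sorted_bs] xs xh.
have [->|xb] := eqVneq x b; first by exists a; rewrite ?inE ?eqxx.
have [y ys ryx] := IH b sorted_bs xs xb.
by exists y; rewrite // inE ys orbT.
Qed.

Lemma unbarred_block_succ n c x :
  block_column n c -> all (fun x => ~~ is_barred x) c ->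
  x \in c -> x != last dflt_letter c -> has (value_is x.2.+1) c.
Proof.
case/andP=> _ succ_c unbarred xc xl.
have [y yc] := sorted_succ succ_c xc xl.
move: (allP unbarred y yc) (allP unbarred x xc).
case: x y yc {xc xl} => -[] i [] [] j yc //= _ _.
rewrite /immsucc /rank /= => /eqP ji.
by apply/hasP; exists (false, j); rewrite // /value_is ji.
Qed.

Lemma barred_block_succ n d x :
  block_column n d -> all is_barred d ->
  x \in d -> x != head dflt_letter d -> has (value_is x.2.+1) d.
Proof.
case/andP=> /andP[/allP wd _] succ_d barred xd xh.
have [y yd] := sorted_pred succ_d xd xh.
move: (allP barred y yd) (allP barred x xd) (wd y yd) (wd x xd).
case: x y yd {xd xh} => -[] i [] [] j yd //= _ _.
rewrite /in_Cn /immsucc /rank /= => /andP[j0 jn] /andP[i0 i_n] /eqP ji.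
by apply/hasP; exists (true, j); rewrite // /value_is /=; lia.
Qed.

Lemma has_flatten (T : eqType) (a : pred T) (ss : seq (seq T)) s :
  s \in ss -> has a s -> has a (flatten ss).
Proof.
by move=> sss /hasP[x xs ax]; apply/hasP; exists x => //; apply/flattenP; exists s.
Qed.

Lemma admissibleP n u :
  u != [::] -> admissible n u <-> forall z, 0 < z <= n -> Nz n z u <= z.
Proof.
rewrite /admissible => ->; split=> [/forallP adm z /andP[z0 zn]|adm].
  by have /implyP := adm (Ordinal (zn : z < n.+1)); apply.
by apply/forallP => -[z zn]; apply/implyP => z0; apply: adm; rewrite z0.
Qed.

Section BlockAnchors.

Variables (n : nat) (cs ds : seq (seq letter)).
Hypothesis unbarred_blocks : forall c, c \in cs ->
  (c != [::]) && block_column n c && all (fun x => ~~ is_barred x) c.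
Hypothesis barred_blocks : forall d, d \in ds ->
  (d != [::]) && block_column n d && all is_barred d.

Let W := flatten cs ++ flatten ds.
Definition block_anchors : seq nat :=
  [seq (last dflt_letter c).2 | c <- cs] ++ [seq (head dflt_letter d).2 | d <- ds].

Lemma block_anchor_occurs z : z \in block_anchors -> has (value_is z) W.
Proof.
rewrite mem_cat has_cat => /orP[/mapP[c cs_c ->]|/mapP[d ds_d ->]].
  have /andP[/andP[] ] := unbarred_blocks cs_c; case: c cs_c => // a c cs_c _ _ _.
  by apply/orP; left; apply: has_flatten cs_c _; apply/hasP;
    exists (last a c); rewrite ?mem_last ///value_is.
have /andP[/andP[] ] := barred_blocks ds_d; case: d ds_d => // a d ds_d _ _ _.
by apply/orP; right; apply: has_flatten ds_d _; apply/hasP;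
  exists a; rewrite ?mem_head ///value_is.
Qed.

Lemma block_anchors_closed y :
  has (value_is y) W -> (y \in block_anchors) || has (value_is y.+1) W.
Proof.
rewrite has_cat => /orP[] /hasP[x /flattenP[b bs xb] /eqP <-].
  have /andP[/andP[_ blk] unb] := unbarred_blocks bs.
  have [->|xl] := eqVneq x (last dflt_letter b).
    by rewrite mem_cat (map_f (fun c => (last dflt_letter c).2)).
  by rewrite has_cat (has_flatten bs (unbarred_block_succ blk unb xb xl)) !orbT.
have /andP[/andP[_ blk] brd] := barred_blocks bs.
have [->|xh] := eqVneq x (head dflt_letter b).
  by rewrite mem_cat (map_f (fun d => (head dflt_letter d).2)) ?orbT.
by rewrite has_cat (has_flatten bs (barred_block_succ blk brd xb xh)) !orbT.
Qed.

End BlockAnchors.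

Theorem proposition2p1 (n : nat) (cs ds : seq (seq letter)) :
  1 <= n ->
  (forall c, c \in cs -> (c != [::]) && block_column n c
                         && all (fun x => ~~ is_barred x) c) ->
  (forall d, d \in ds -> (d != [::]) && block_column n d
                         && all is_barred d) ->
  column n (flatten cs ++ flatten ds) ->
  flatten cs ++ flatten ds != [::] ->
  (admissible n (flatten cs ++ flatten ds) <->
   (forall z, z \in [seq (last dflt_letter c).2 | c <- cs]
                    ++ [seq (head dflt_letter d).2 | d <- ds] ->
              Nz n z (flatten cs ++ flatten ds) <= z)).
Proof.
move=> _ hc hd /andP[word_W _] /admissibleP ->.
split=> [adm z /(block_anchor_occurs hc hd) z_occurs|anchors z /andP[_ zn]].
  exact/adm/(value_in_range word_W z_occurs).
exact: Nz_bound_from_anchors word_W (block_anchors_closed hc hd) anchors z zn.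
Qed.
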